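(* Let $\mathcal{H}$ be a normed vector space, $c:\mathcal{H}\to[0,\infty)$ a scale function, $\mathcal{R}:\mathcal{H}\to[0,\infty)$ a regularizer, and let $\mathcal{L},\mathcal{L}_\eta:\mathcal{H}\to\mathbb{R}$ be the expected loss on original data and on perturbed data, and $\widehat{\mathcal{L}}_\eta$ the (random) empirical loss on $n$ perturbed samples. Assume: (A) (scaled uniform convergence) with probability at least $1-\delta$ over the $n$ samples, $|\widehat{\mathcal{L}}_\eta(\theta)-\mathcal{L}_\eta(\theta)|\le\varepsilon_{n,\delta}\,c(\theta)$ for all $\theta\in\mathcal{H}$; (B) (super-scale regularization) there is $r:[0,\infty)\to[0,\infty)$ with $z\le r(z)$ for all $z\ge0$ and $r(c(\theta))\le\mathcal{R}(\theta)<\infty$ for all $\theta\in\mathcal{H}$; (C) (bounded perturbed loss) $|\mathcal{L}_\eta(\theta)-\mathcal{L}(\theta)|\le\varepsilon'_n\,c(\theta)$ for all $\theta\in\mathcal{H}$. Let $\theta^*\in\arg\min_{\theta\in\mathcal{H}}\mathcal{L}(\theta)$ and $\theta^*_\eta\in\arg\min_{\theta\in\mathcal{H}}\mathcal{L}_\eta(\theta)$ exist. Let $\alpha\ge2$, $\lambda_n=\alpha\varepsilon_{n,\delta}$, $\xi\ge0$, and let $\widehat{\theta}_\eta$ be any $\xi$-approximate minimizer of the perturbed regularized empirical loss, i.e. $$\widehat{\mathcal{L}}_\eta(\widehat{\theta}_\eta)+\lambda_n\mathcal{R}(\widehat{\theta}_\eta)\le\xi+\inf_{\theta\in\mathcal{H}}\big(\widehat{\mathcal{L}}_\eta(\theta)+\lambda_n\mathcal{R}(\theta)\big).$$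 If $\varepsilon'_n\le\varepsilon_{n,\delta}$, then with probability at least $1-\delta$, $$\mathcal{L}(\widehat{\theta}_\eta)-\mathcal{L}(\theta^* )\le\varepsilon_{n,\delta}\big(\alpha\mathcal{R}(\theta^*_\eta)+c(\theta^*_\eta)\big)+\varepsilon'_n\,c(\theta^* )+\xi.$$
   Context: Setting: data $x^{(1)},\dots,x^{(n)}$ are drawn from an unknown distribution $\mathcal{D}$ and perturbed by noise $\eta^{(i)}$ drawn from a distribution $\mathcal{Q}$ via a map $\psi(x,\eta)$; $\widehat{\mathcal{L}}_\eta$ is the empirical loss on the perturbed samples $\psi(x^{(i)},\eta^{(i)})$, $\mathcal{L}_\eta=\mathbb{E}_{\mathcal{D},\mathcal{Q}}[\widehat{\mathcal{L}}_\eta]$, and $\mathcal{L}=\mathbb{E}_{\mathcal{D}}[\widehat{\mathcal{L}}]$ with $\widehat{\mathcal{L}}$ the empirical loss on the original samples. The rate $\varepsilon_{n,\delta}$ is nonincreasing in $n$ and $\delta$ and tends to $0$ as $n\to\infty$ for each $\delta\in(0,1)$. *)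

From Stdlib Require Import Reals.
Open Scope R_scope.

(* An abstract "probability" on the sample space Omega (the n perturbed
   samples): any set function on events that is nonnegative, gives the sure
   event probability 1, and is monotone under inclusion.  Every probability
   measure (via its outer measure on arbitrary events) is such a function. *)
Definition is_abstract_prob {Omega : Type} (P : (Omega -> Prop) -> R) : Prop :=
  (forall A, 0 <= P A) /\
  P (fun _ => True) = 1 /\
  (forall A B : Omega -> Prop, (forall w, A w -> B w) -> P A <= P B).

Definition is_eps_rate (epsf : nat -> R -> R) : Prop :=
  (forall (n m : nat) d, (n <= m)%nat -> epsf m d <= epsf n d) /\
  (forall n d1 d2, 0 < d1 -> d1 <= d2 -> d2 < 1 -> epsf n d2 <= epsf n d1) /\
  (forall d, 0 < d < 1 -> Un_cv (fun n => epsf n d) 0).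

Definition is_minimizer {H : Type} (f : H -> R) (theta : H) : Prop :=
  forall t, f theta <= f t.

Definition xi_approx_minimizer {H : Type} (F : H -> R) (xi : R) (x : H) : Prop :=
  forall t, F x <= xi + F t.

From Stdlib Require Import Reals Lra Psatz.
Open Scope R_scope.

(* Fix a sample on which the uniform deviation bound (A) holds.  Comparing the
   approximate minimizer with the competitor [theta_eta_star] in the regularized
   empirical objective and translating empirical to perturbed to original loss
   costs [(eps + eps') c(theta_hat) <= 2 eps c(theta_hat)] at [theta_hat]; this is
   absorbed by the regularizer, because [lambda = alpha eps >= 2 eps] and
   [c <= Reg] by super-scale regularization.  The remaining terms are the
   deviations at [theta_eta_star] and [theta_star] (linked through
   [Leta theta_eta_star <= Leta theta_star]), plus [xi]. *)

Lemma Rabs_le_inv (x y : R) : Rabs x <= y -> - y <= x <= y.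
Proof.
  intros Hxy; pose proof (Rle_abs x); pose proof (Rle_abs (- x)).
  rewrite Rabs_Ropp in *; lra.
Qed.

Lemma eps_rate_nonneg {epsf : nat -> R -> R} (n : nat) {delta : R} :
  is_eps_rate epsf -> 0 < delta < 1 -> 0 <= epsf n delta.
Proof.
  intros [Hmono [_ Hcv]] Hdelta.
  apply (decreasing_ineq (fun m => epsf m delta)); [|exact (Hcv delta Hdelta)].
  intros m; apply Hmono; lia.
Qed.

Lemma scale_le_reg {H : Type} {c Reg : H -> R} {r : R -> R} :
  (forall t, 0 <= c t) -> (forall z, 0 <= z -> z <= r z) ->
  (forall t, r (c t) <= Reg t) -> forall t, c t <= Reg t.
Proof. intros Hc Hr HrR t; apply (Rle_trans _ (r (c t))); auto. Qed.

Lemma abstract_prob_ge_mono {Omega : Type} {P : (Omega -> Prop) -> R}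
    {A B : Omega -> Prop} {p : R} :
  is_abstract_prob P -> P A >= p -> (forall w, A w -> B w) -> P B >= p.
Proof.
  intros (_ & _ & Hmono) HA HAB.
  apply Rle_ge, (Rle_trans _ (P A)); auto with real.
Qed.

Lemma excess_risk_bound {H : Type} (c Reg L Leta Lhat : H -> R)
    (eps eps' alpha xi : R) (theta_star theta_eta_star theta_hat : H) :
  0 <= eps -> eps' <= eps -> alpha >= 2 ->
  (forall t, 0 <= c t) -> (forall t, c t <= Reg t) ->
  (forall t, Rabs (Lhat t - Leta t) <= eps * c t) ->
  (forall t, Rabs (Leta t - L t) <= eps' * c t) ->
  is_minimizer Leta theta_eta_star ->
  xi_approx_minimizer (fun t => Lhat t + alpha * eps * Reg t) xi theta_hat ->
  L theta_hat - L theta_star <=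
    eps * (alpha * Reg theta_eta_star + c theta_eta_star)
    + eps' * c theta_star + xi.
Proof.
  intros Heps Heps' Halpha Hc HcR Hdev Hpert Hmin_eta Happrox.
  pose proof (Happrox theta_eta_star) as Hcompare; simpl in Hcompare.
  pose proof (Hmin_eta theta_star) as Heta_star.
  destruct (Rabs_le_inv _ _ (Hdev theta_hat)).
  destruct (Rabs_le_inv _ _ (Hdev theta_eta_star)).
  destruct (Rabs_le_inv _ _ (Hpert theta_hat)).
  destruct (Rabs_le_inv _ _ (Hpert theta_star)).
  assert (Habsorb : (eps + eps') * c theta_hat <= alpha * eps * Reg theta_hat).
  { pose proof (Hc theta_hat); pose proof (HcR theta_hat).
    apply (Rle_trans _ (alpha * eps * c theta_hat)); [nra|].
    apply Rmult_le_compat_l; [nra | assumption]. }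
  lra.
Qed.

Theorem theorem2
  (H : Type) (Omega : Type) (P : (Omega -> Prop) -> R)
  (c Reg : H -> R) (L Leta : H -> R) (Lhat : Omega -> H -> R)
  (epsf : nat -> R -> R) (epsp : nat -> R) (n : nat) (delta : R)
  (r : R -> R) (theta_star theta_eta_star : H)
  (alpha xi : R) (theta_hat : Omega -> H) :
  is_abstract_prob P ->
  is_eps_rate epsf ->
  0 < delta < 1 ->
  (forall t : H, 0 <= c t) ->
  (forall t : H, 0 <= Reg t) ->
  (* (A) scaled uniform convergence *)
  P (fun w => forall t : H, Rabs (Lhat w t - Leta t) <= epsf n delta * c t)
    >= 1 - delta ->
  (* (B) super-scale regularization *)
  (forall z, 0 <= z -> 0 <= r z) ->
  (forall z, 0 <= z -> z <= r z) ->
  (forall t : H, r (c t) <= Reg t) ->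
  (* (C) bounded perturbed loss *)
  (forall t : H, Rabs (Leta t - L t) <= epsp n * c t) ->
  is_minimizer L theta_star ->
  is_minimizer Leta theta_eta_star ->
  alpha >= 2 ->
  xi >= 0 ->
  (forall w : Omega, @xi_approx_minimizer H
      (fun t : H => Lhat w t + alpha * epsf n delta * Reg t) xi (theta_hat w)) ->
  epsp n <= epsf n delta ->
  P (fun w => L (theta_hat w) - L theta_star <=
              epsf n delta * (alpha * Reg theta_eta_star + c theta_eta_star)
              + epsp n * c theta_star + xi)
    >= 1 - delta.
Proof.
  intros Hprob Hrate Hdelta Hc _ Hunif _ Hr HrReg Hpert _ Hmin_eta Halpha _
    Happrox Heps'.
  apply (abstract_prob_ge_mono Hprob Hunif).
  intros w Hdev.
  apply (excess_risk_bound c Reg L Leta (Lhat w)); auto.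
  - exact (eps_rate_nonneg n Hrate Hdelta).
  - exact (scale_le_reg Hc Hr HrReg).
Qed.
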